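(* Let $a\in(0,0.01)$ be a constant and $k$ such that $ak$ is an even integer. Let $G$ be a graph and $K,K'$ vertex sets of size $k$ with $|K\cap K'|\ge(1-10a)k$ such that $F=G[K]\in\mathcal{F}_k$ with partitions $K=A\cup B$, $A=A_1\cup\dots\cup A_r$, and $F'=G[K']\in\mathcal{F}_k$ with partitions $K'=A'\cup B'$, $A'=A'_1\cup\dots\cup A'_r$ (as in the definition of $\mathcal{F}_k$). Then: 1. a vertex $v\in K\cap K'$ lies in $A$ if and only if it lies in $A'$; 2. for $u,v\in A\cap A'$, $\{u,v\}=A_j$ for some $j$ if and only if $\{u,v\}=A'_{j'}$ for some $j'$.
   Context: A graph $F$ on a $k$-set $K$ is in $\mathcal{F}_k$ with respect to partitions $K=A\cup B$, $A=A_1\cup\dots\cup A_r$, where $|A|=ak$, $|B|=(1-a)k$, $r=ak/2$, $|A_i|=2$, if: (1) $F$ is bipartite with parts $A$ and $B$; (2) for every $i$ and every $\beta\in B$, $\beta$ is adjacent either to both vertices of $A_i$ or to neither; (3) every vertex of $A$ has degree at least $0.15k$ in $F$; (4) for all $i\ne j$, the symmetric difference of the neighborhoods of $A_i$ and $A_j$ has size at least $0.25k$. *)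

From mathcomp Require Import all_boot all_order all_algebra.
Set Implicit Arguments. Unset Strict Implicit. Unset Printing Implicit Defensive.
Import Order.TTheory GRing.Theory Num.Theory.
Local Open Scope ring_scope.

(* A graph is a relation [G : rel V] on a finite vertex type V (assumed
   symmetric and irreflexive in the theorem).  F = G[K] is the induced
   subgraph on K. *)

Definition nbhdK (V : finType) (G : rel V) (K S : {set V}) : {set V} :=
  [set y in K | [exists x in S, G x y]].

Definition symdiff (V : finType) (X Y : {set V}) : {set V} :=
  (X :\: Y) :|: (Y :\: X).

Definition in_Fk (R : realFieldType) (a : R) (k : nat) (V : finType)
    (G : rel V) (K A B : {set V}) (r : nat) (Ai : 'I_r -> {set V}) : Prop :=
  ((
      K = A :|: B /\ [disjoint A & B]) /\
      [/\ #|K| = k, (#|A|%:R = a * k%:R), (#|B|%:R = (1 - a) * k%:R)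
        & r%:R = a * k%:R / 2] /\
      [/\ A = \bigcup_(i < r) Ai i,
          (forall i j : 'I_r, i != j -> [disjoint Ai i & Ai j])
        & (forall i : 'I_r, #|Ai i| = 2)] /\
    [/\
      (forall x y, x \in K -> y \in K -> G x y ->
          (x \in A) && (y \in B) || (x \in B) && (y \in A)),
      (forall (i : 'I_r) b x y, b \in B -> x \in Ai i -> y \in Ai i ->
          G b x = G b y),
      (forall x, x \in A -> (15%:R / 100%:R : R) * k%:R <= #|nbhdK G K [set x]|%:R)
    &
      (forall i j : 'I_r, i != j ->
          (25%:R / 100%:R : R) * k%:R <=
            #|symdiff (nbhdK G K (Ai i)) (nbhdK G K (Ai j))|%:R)]).

From mathcomp Require Import all_boot all_order all_algebra.
From mathcomp Require Import lra.
Import Order.TTheory GRing.Theory Num.Theory.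
Set Implicit Arguments. Unset Strict Implicit. Unset Printing Implicit Defensive.
Local Open Scope ring_scope.

(* Both parts are counting arguments against the overlap: K and K' differ in
   at most 10ak < 0.1k vertices.
   (1) If v is in A but not in A', all neighbours of v in K' lie in A', so v
   has at most |A'| + |K \ K'| <= 11ak < 0.15k neighbours in K, contradicting
   the degree condition of F.
   (2) If {u, v} = A_j, then u and v have the same neighbours in K.  Were they
   in different pairs A'_i, A'_j of F', the neighbourhoods of these pairs in
   K' would differ only inside K' \ K, i.e. in fewer than 0.25k vertices. *)

Lemma in_nbhdK1 (V : finType) (G : rel V) (K : {set V}) x y :
  (y \in nbhdK G K [set x]) = (y \in K) && G x y.
Proof.
rewrite inE; congr (_ && _); apply/existsP/idP => [[x' /andP[/set1P-> //]]|].
by exists x; rewrite set11.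
Qed.

Lemma card_setD_overlap (R : realFieldType) (c : R) (k : nat) (V : finType)
    (K K' : {set V}) :
  #|K| = k -> (1 - c) * k%:R <= #|K :&: K'|%:R -> #|K :\: K'|%:R <= c * k%:R.
Proof.
move=> cardK; have : #|K :&: K'|%:R + #|K :\: K'|%:R = k%:R :> R.
  by rewrite -natrD cardsID cardK.
lra.
Qed.

Lemma symdiff_nbhdK1_subset (V : finType) (G : rel V) (K K' : {set V}) u v :
  {in K, forall y, G u y = G v y} ->
  symdiff (nbhdK G K' [set u]) (nbhdK G K' [set v]) \subset K' :\: K.
Proof.
move=> adj_uv; apply/subsetP => y; rewrite !in_setU !in_setD !in_nbhdK1.
by have [/adj_uv->|] := boolP (y \in K); case: (y \in K'); case: (G v y).
Qed.

Section InFk.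

Variables (R : realFieldType) (a : R) (k r : nat) (V : finType) (G : rel V).
Implicit Types (K A B : {set V}) (Ai : 'I_r -> {set V}).

Lemma in_Fk_nbhdK1_subset K A B Ai v :
  in_Fk a k G K A B Ai -> v \in K -> v \notin A -> nbhdK G K [set v] \subset A.
Proof.
move=> [_ [_ [_ [bip _ _ _]]]] vK vNA; apply/subsetP => y.
rewrite in_nbhdK1 => /andP[yK Gvy].
by case/orP: (bip _ _ vK yK Gvy) => /andP[] //; rewrite (negbTE vNA).
Qed.

Lemma in_Fk_pair_adj K A B Ai i x y z :
  symmetric G -> in_Fk a k G K A B Ai ->
  x \in Ai i -> y \in Ai i -> z \in K -> G x z = G y z.
Proof.
move=> Gs [[defK disAB] [_ [[defA _ _] [bip adjB _ _]]]] xi yi zK.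
have adj_inB w : w \in Ai i -> G w z -> z \in B.
  move=> wi Gwz; have wA : w \in A by rewrite defA; apply/bigcupP; exists i.
  have wK : w \in K by rewrite defK inE wA.
  by case/orP: (bip _ _ wK zK Gwz) => /andP[] //; rewrite (disjointFr disAB wA).
have [zB|zNB] := boolP (z \in B); first by rewrite Gs (adjB i z x y) // Gs.
by rewrite (contraNF (adj_inB x xi) zNB) (contraNF (adj_inB y yi) zNB).
Qed.

Lemma in_Fk_nbhdK_pair K A B Ai i x :
  symmetric G -> in_Fk a k G K A B Ai ->
  x \in Ai i -> nbhdK G K (Ai i) = nbhdK G K [set x].
Proof.
move=> Gs FK xi; apply/setP => y; rewrite in_nbhdK1 inE.
apply/andP/andP => [[yK /existsP[x' /andP[x'i Gx'y]]]|[yK Gxy]].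
  by rewrite (in_Fk_pair_adj Gs FK xi x'i yK).
by split=> //; apply/existsP; exists x; rewrite xi.
Qed.

Lemma in_Fk_overlap_part K A B K' A' B' Ai Ai' v :
  a < 1%:R / 100%:R -> (1 - 10%:R * a) * k%:R <= #|K :&: K'|%:R ->
  in_Fk a k G K A B Ai -> in_Fk a k G K' A' B' Ai' ->
  v \in K :&: K' -> v \in A -> v \in A'.
Proof.
move=> a_small overlap FK FK' /setIP[vK vK'] vA; apply/contraT => vNA'.
have [_ [[cardK _ _ _] [_ [_ _ deg _]]]] := FK.
have [_ [[_ cardA' _ _] _]] := FK'.
set N := nbhdK G K [set v].
have NK'_sub : N :&: K' \subset A'.
  apply: subset_trans (in_Fk_nbhdK1_subset FK' vK' vNA').
  by apply/subsetP => y /setIP[]; rewrite !in_nbhdK1 => /andP[_ ->] ->.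
have NK'D_sub : N :\: K' \subset K :\: K'.
  by apply: setSD; apply/subsetP => y; rewrite in_nbhdK1 => /andP[].
have cardN : #|N|%:R <= #|A'|%:R + #|K :\: K'|%:R :> R.
  by rewrite -natrD ler_nat -(cardsID K' N) leq_add ?subset_leq_card.
have := card_setD_overlap cardK overlap.
have k_gt0 : (0 : R) < k%:R by rewrite ltr0n -cardK; apply/card_gt0P; exists v.
have : a * k%:R < 1%:R / 100%:R * k%:R by rewrite ltr_pM2r.
move: (deg v vA) cardN; rewrite -/N cardA'; lra.
Qed.

Lemma in_Fk_overlap_pair K A B K' A' B' Ai Ai' u v :
  symmetric G -> a < 1%:R / 100%:R ->
  (1 - 10%:R * a) * k%:R <= #|K :&: K'|%:R ->
  in_Fk a k G K A B Ai -> in_Fk a k G K' A' B' Ai' ->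
  u \in A' -> v \in A' ->
  (exists j, [set u; v] = Ai j) -> exists j', [set u; v] = Ai' j'.
Proof.
move=> Gs a_small overlap FK FK' uA' vA' [j defj].
have [_ [_ [[_ _ cardAi] _]]] := FK.
have [[defK' _] [[cardK' _ _ _] [[defA' _ cardAi'] [_ _ _ sep']]]] := FK'.
have uj : u \in Ai j by rewrite -defj set21.
have vj : v \in Ai j by rewrite -defj set22.
have uNv : u != v.
  by apply/eqP => uv; have := cardAi j; rewrite -defj uv setUid cards1.
have k_gt0 : (0 : R) < k%:R.
  by rewrite ltr0n -cardK'; apply/card_gt0P; exists u; rewrite defK' inE uA'.
move: uA' vA'; rewrite defA' => /bigcupP[i _ ui] /bigcupP[i' _ vi'].
case: (eqVneq i i') vi' => [<- vi|ii' vi'].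
  exists i; apply/eqP; rewrite eqEcard cardAi' cards2 uNv andbT.
  by apply/subsetP => y /set2P[]->.
have := sep' _ _ ii'.
rewrite (in_Fk_nbhdK_pair Gs FK' ui) (in_Fk_nbhdK_pair Gs FK' vi').
have /subset_leq_card := symdiff_nbhdK1_subset K' (fun y => in_Fk_pair_adj Gs FK uj vj).
rewrite -(ler_nat R); rewrite setIC in overlap.
have := card_setD_overlap cardK' overlap.
have : a * k%:R < 1%:R / 100%:R * k%:R by rewrite ltr_pM2r.
lra.
Qed.

End InFk.

Theorem mainTheorem14 (R : realFieldType) (a : R) (k r : nat)
    (V : finType) (G : rel V)
    (K A B K' A' B' : {set V}) (Ai Ai' : 'I_r -> {set V}) :
  0 < a -> a < 1%:R / 100%:R ->
  a * k%:R = (2 * r)%:R ->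
  symmetric G -> irreflexive G ->
  #|K| = k -> #|K'| = k ->
  (1 - 10%:R * a) * k%:R <= #|K :&: K'|%:R ->
  in_Fk a k G K A B Ai ->
  in_Fk a k G K' A' B' Ai' ->
  (forall v, v \in K :&: K' -> (v \in A <-> v \in A')) /\
  (forall u v, u \in A :&: A' -> v \in A :&: A' ->
     ((exists j : 'I_r, [set u; v] = Ai j) <->
      (exists j' : 'I_r, [set u; v] = Ai' j'))).
Proof.
move=> _ a_small _ Gs _ _ _ overlap FK FK'.
have overlap' : (1 - 10%:R * a) * k%:R <= #|K' :&: K|%:R by rewrite setIC.
split=> [v vKK'|u v /setIP[uA uA'] /setIP[vA vA']]; split.
- exact: (in_Fk_overlap_part a_small overlap FK FK' vKK').
- by apply: (in_Fk_overlap_part a_small overlap' FK' FK); rewrite setIC.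
- exact: (in_Fk_overlap_pair Gs a_small overlap FK FK' uA' vA').
- exact: (in_Fk_overlap_pair Gs a_small overlap' FK' FK uA vA).
Qed.
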